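(* There is an absolute constant $c>0$ such that the following holds. Let $X,Y$ be a section-pair with $m$ chords and let $k\ge 1$ be an integer. Suppose that no vertex of $X\cup Y$ is incident to more than $\frac{m}{10k^2}$ chords. Then there is a collection of subsection pairs $X_1,Y_1;\dots;X_k,Y_k$ which is either parallel or interlacing, such that $e(X_i,Y_i)\ge c\,\frac{m}{k^4}$ for all $1\le i\le k$.
   Context: A section-pair in a graph $G$ is a pair $X,Y$ of vertex-disjoint paths; the two endpoints of $X$ are designated its top $x^{t}$ and bottom $x^{b}$, and those of $Y$ its top $y^t$ and bottom $y^b$. For distinct $x_1,x_2\in X$, $x_1$ is above $x_2$ if $x_1$ is closer to $x^t$ along $X$ than $x_2$, otherwise below; similarly in $Y$. For vertex sets $A,B\subseteq X$ (or $\subseteq Y$), $A$ is above (resp. below) $B$ if every vertex of $A$ is above (resp. below) every vertex of $B$. A chord is an edge of $G$ with one endpoint in $X$ and one in $Y$. A subsection pair of $X,Y$ is a section-pair $X',Y'$ where $X'$ is a subpath of $X$ and $Y'$ a subpath of $Y$ (tops being the endpoints closer to $x^t$, resp. $y^t$); $E(X',Y')$ is the set of chords with one endpoint in $X'$ and one in $Y'$, and $e(X',Y')=|E(X',Y')|$. A collection $X_1,Y_1;\dots;X_t,Y_t$ of subsection pairs, with the $X_i$ pairwise vertex-disjoint and the $Y_i$ pairwise vertex-disjoint, labeled so that $X_i$ is below $X_j$ for all $i<j$, is parallel if also $Y_i$ is below $Y_j$ for all $i<j$, and interlacing if $Y_i$ is above $Y_j$ for all $i<j$. *)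

From HB Require Import structures.
From mathcomp Require Import all_boot all_order all_algebra.
Set Implicit Arguments. Unset Strict Implicit. Unset Printing Implicit Defensive.

(* A graph G is a finite type V with a symmetric irreflexive adjacency e.
   A path is a nonempty duplicate-free sequence of vertices, consecutive
   ones adjacent; its head is the top and its last element the bottom. *)
Definition is_path (V : finType) (e : rel V) (P : seq V) : bool :=
  if P is x :: p then path e x p && uniq P else false.

Definition section_pair (V : finType) (e : rel V) (X Y : seq V) : bool :=
  [&& is_path e X, is_path e Y & [disjoint X & Y]].

(* X' is a subpath of X, oriented so that its top is the end closer to the
   top of X: a nonempty contiguous subsequence of X. *)
Definition subpath_of (V : finType) (X' X : seq V) : bool :=
  (X' != [::]) && infix X' X.

(* E(X',Y'): chords with one endpoint in X' and one in Y' (counted as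
   ordered pairs (x, y) with x in X', y in Y'; X', Y' are disjoint so each
   chord is counted once). *)
Definition chords (V : finType) (e : rel V) (X' Y' : seq V) : {set V * V} :=
  [set p : V * V | [&& p.1 \in X', p.2 \in Y' & e p.1 p.2]].

Definition nchords (V : finType) (e : rel V) (X' Y' : seq V) : nat :=
  #|chords e X' Y'|.

Definition chord_deg (V : finType) (e : rel V) (X Y : seq V) (v : V) : nat :=
  #|[set y in Y | (v \in X) && e v y]| + #|[set x in X | (v \in Y) && e x v]|.

(* Inside the path P, A is below B: every vertex of A is farther from the
   top of P than every vertex of B. *)
Definition below_in (V : eqType) (P A B : seq V) : bool :=
  all (fun a => all (fun b => index b P < index a P) B) A.

Definition collection (V : finType) (X Y : seq V) (k : nat)
    (Xs Ys : 'I_k -> seq V) : Prop :=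
  [/\ forall i, subpath_of (Xs i) X,
      forall i, subpath_of (Ys i) Y,
      forall i j, i != j -> [disjoint Xs i & Xs j],
      forall i j, i != j -> [disjoint Ys i & Ys j] &
      forall i j : 'I_k, i < j -> below_in X (Xs i) (Xs j)].

Definition parallel (V : finType) (Y : seq V) (k : nat)
    (Ys : 'I_k -> seq V) : Prop :=
  forall i j : 'I_k, i < j -> below_in Y (Ys i) (Ys j).

Definition interlacing (V : finType) (Y : seq V) (k : nat)
    (Ys : 'I_k -> seq V) : Prop :=
  forall i j : 'I_k, i < j -> below_in Y (Ys j) (Ys i).

From HB Require Import structures.
From mathcomp Require Import all_boot all_order all_algebra.
From mathcomp Require Import zify.
Set Implicit Arguments. Unset Strict Implicit. Unset Printing Implicit Defensive.

(* Record the m chords as points (i, j) of a grid, i a position on X and j a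
   position on Y.  By the degree hypothesis no row or column holds more than
   m/t points, t = 10 k^2.  Cut the rows into t blocks of consecutive
   positions by cumulative chord count, and likewise the columns; each row
   block and each column block then holds at most 2m/t chords
   ([block_mass]).  Call a cell of the resulting t x t grid heavy if it holds
   at least m/(2 t^2) chords.  Light cells hold at most m/2 chords in total.
   If k heavy cells formed no increasing and no decreasing chain, the pair of
   chain heights of a heavy cell (Erdos-Szekeres) would take at most k^2
   values, each fibre lying in one row block plus one column block, so heavy
   cells would hold at most k^2 * 4m/t = 2m/5 chords; hence such a chain
   exists ([heavy_chain]).  Its row and column blocks, read along the chain,
   form a parallel (increasing chain) or interlacing (decreasing chain)
   collection whose pairs each carry at least m/(200 k^4) chords. *)


(* Cutting a total mass m into t consecutive blocks: a point whose prefix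
   mass is n is sent to block floor(n t / m), capped at t - 1. *)
Definition block_index (m t n : nat) : nat := minn (n * t %/ m) t.-1.

Lemma block_index_lt m t n : 0 < t -> block_index m t n < t.
Proof. by move=> t_gt0; rewrite /block_index; apply: leq_ltn_trans (geq_minr _ _) _; lia. Qed.

Lemma block_index_mono m t : {homo block_index m t : a b / a <= b}.
Proof.
move=> a b le_ab; rewrite /block_index.
have : a * t %/ m <= b * t %/ m by apply: leq_div2r; rewrite leq_mul2r le_ab orbT.
lia.
Qed.

(* Two prefix masses a <= c <= m landing in the same block B differ by at
   most m / t, since B m <= a t and c t <= (B + 1) m. *)
Lemma block_index_gap m t a c : 0 < m -> a <= c <= m ->
  block_index m t a = block_index m t c -> (c - a) * t <= m.
Proof.
move=> m_gt0 /andP[le_ac le_cm]; rewrite /block_index.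
set B := minn _ _ => eqB.
have lower : B * m <= a * t.
  by apply: leq_trans (leq_divM _ m); rewrite leq_mul2r geq_minl orbT.
have upper : c * t <= B.+1 * m.
  rewrite eqB; case: (leqP (c * t %/ m) t.-1) => [le_q | lt_q].
    exact/ltnW/ltn_ceil.
  have t_gt0 : 0 < t by move: lt_q; case: (t) => //; rewrite muln0 div0n.
  by rewrite prednK // mulnC leq_mul2l le_cm orbT.
rewrite mulnBl; lia.
Qed.

Section BlockPartition.
Variables (T : finType) (S : {set T}) (pos : T -> nat).

Definition prefix_mass (i : nat) : nat := #|[set x in S | pos x < i]|.

Definition block_of (t i : nat) : nat := block_index #|S| t (prefix_mass i).

Lemma prefix_mass_mono : {homo prefix_mass : i j / i <= j}.
Proof.
move=> i j le_ij; apply/subset_leq_card/subsetP => x.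
by rewrite !inE => /andP[-> lt_xi]; apply: leq_trans le_ij.
Qed.

Lemma prefix_mass_le i : prefix_mass i <= #|S|.
Proof. by apply/subset_leq_card/subsetP => x; rewrite inE => /andP[]. Qed.

Lemma block_of_mono t : {homo block_of t : i j / i <= j}.
Proof. by move=> i j /prefix_mass_mono; apply: block_index_mono. Qed.

Lemma card_window lo hi : lo <= hi ->
  #|[set x in S | lo <= pos x < hi]| = prefix_mass hi - prefix_mass lo.
Proof.
move=> le_lohi; rewrite /prefix_mass.
set Lo := [set x in S | pos x < lo]; set Hi := [set x in S | pos x < hi].
have sub : Lo \subset Hi.
  by apply/subsetP => x; rewrite !inE => /andP[-> /leq_trans->].
rewrite -(cardsID Lo Hi) (setIidPr sub) addKn; apply: eq_card => x.
by rewrite !inE; case: (x \in S); rewrite //= -leqNgt.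
Qed.

(* If no single position carries more than |S|/t points, each of the t
   blocks carries at most 2|S|/t points: the positions of a block span a
   window of prefix mass at most |S|/t, plus possibly its last position. *)
Lemma block_mass t b : 0 < #|S| ->
  (forall i, t * #|[set x in S | pos x == i]| <= #|S|) ->
  t * #|[set x in S | block_of t (pos x) == b]| <= 2 * #|S|.
Proof.
move=> S_gt0 atom_small; set A := [set x in S | _].
have [->|[x0 A_x0]] := set_0Vmem A; first by rewrite cards0 muln0.
have [xl A_xl min_xl] := @arg_minnP _ x0 (mem A) pos A_x0.
have [xh A_xh max_xh] := @arg_maxnP _ x0 (mem A) pos A_x0.
have le_lh : pos xl <= pos xh by apply: min_xl.
have cover : A \subset [set x in S | pos xl <= pos x < pos xh] :|: [set x in S | pos x == pos xh].
  apply/subsetP => x A_x; move: (A_x); rewrite !inE => /andP[-> _] /=.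
  by rewrite min_xl //= orbC -leq_eqVlt; apply: max_xh.
have gap : (prefix_mass (pos xh) - prefix_mass (pos xl)) * t <= #|S|.
  apply: block_index_gap; rewrite ?prefix_mass_mono ?prefix_mass_le //.
  by move: A_xl A_xh; rewrite !inE /block_of => /andP[_ /eqP->] /andP[_ /eqP->].
have := leq_trans (subset_leq_card cover) (leq_card_setU _ _).
rewrite card_window // => le_A; have := atom_small (pos xh).
have := leq_mul (leqnn t) le_A; rewrite mulnDr; lia.
Qed.
End BlockPartition.

Section ChainHeight.
Variables (C : finType) (H : pred C) (R : rel C) (k : nat).
Hypotheses (k_gt0 : 0 < k) (R_trans : transitive R).

Definition chain_to (n : nat) (a : C) : bool :=
  [exists f : {ffun 'I_n.+1 -> C},
    [&& [forall i, H (f i)],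
        [forall i : 'I_n.+1, forall j : 'I_n.+1, (i < j) ==> R (f i) (f j)]
      & f ord_max == a]].

Definition height (a : C) : nat := \max_(n < k | chain_to n a) n.

Lemma height_lt a : height a < k.
Proof.
have : height a <= k.-1 by apply/bigmax_leqP => n _; rewrite -ltnS prednK.
by case: (k) k_gt0.
Qed.

Lemma chain_to0 a : H a -> chain_to 0 a.
Proof.
move=> Ha; apply/existsP; exists [ffun _ => a]; rewrite ffunE eqxx andbT.
apply/andP; split; first by apply/forallP => i; rewrite ffunE.
by apply/forallP => i; apply/forallP => j; rewrite !ord1.
Qed.

Lemma chain_to_extend n a b : chain_to n a -> H b -> R a b -> chain_to n.+1 b.
Proof.
move=> /existsP[f /and3P[/forallP Hf /forallP Rf /eqP fa]] Hb Rab.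
apply/existsP; exists [ffun i : 'I_n.+2 => if i < n.+1 then f (inord i) else b].
rewrite !ffunE ltnn eqxx andbT; apply/andP; split.
  by apply/forallP => i; rewrite ffunE; case: ifP.
have R_to_b (i : 'I_n.+1) : R (f i) b.
  have [lt_in | le_ni] := ltnP i n; last first.
    have -> : i = ord_max by apply: val_inj => /=; move: (ltn_ord i); lia.
    by rewrite fa.
  by apply: R_trans Rab; rewrite -fa; apply: (implyP (forallP (Rf i) ord_max)).
apply/forallP => i; apply/forallP => j; apply/implyP => lt_ij; rewrite !ffunE.
have lt_in : i < n.+1 by move: (ltn_ord j); lia.
rewrite lt_in; case: ifP => [lt_jn | _]; last exact: R_to_b.
by have := implyP (forallP (Rf (inord i)) (inord j)); rewrite !inordK //; apply.
Qed.

Lemma chain_to_height a : H a -> chain_to (height a) a.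
Proof.
move=> Ha; pose A := [pred n : 'I_k | chain_to n a].
have A_gt0 : 0 < #|A| by apply/card_gt0P; exists (Ordinal k_gt0); exact: chain_to0.
have [n chain_n max_n] := eq_bigmax_cond val A_gt0.
by rewrite /height (eq_bigl (mem A)) // max_n.
Qed.

Lemma height_increase a b : H a -> H b -> R a b -> ~~ chain_to k.-1 a ->
  height a < height b.
Proof.
move=> Ha Hb Rab no_long.
have chain_a := chain_to_height Ha.
have ne_a : height a != k.-1 by apply: contraNneq no_long => <-.
have lt_k : (height a).+1 < k by move: (height_lt a) ne_a; case: (k) => //; lia.
exact: (leq_bigmax_cond (Ordinal lt_k) (chain_to_extend chain_a Hb Rab)).
Qed.
End ChainHeight.

Lemma sum_card_fibres (T C : finType) (S : {set T}) (f : T -> C) (Q : pred C) :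
  \sum_(c | Q c) #|[set x in S | f x == c]| = #|[set x in S | Q (f x)]|.
Proof.
rewrite -sum1_card (partition_big f Q) => [|x]; last by rewrite inE => /andP[].
apply: eq_bigr => c Qc; rewrite -sum1_card; apply: eq_bigl => x; rewrite !inE.
by case: eqP => [->|]; rewrite ?Qc ?andbT ?andbF.
Qed.

Lemma sum_le_cover (C : finType) (P Q1 Q2 : pred C) (w : C -> nat) :
  (forall c, P c -> Q1 c || Q2 c) ->
  \sum_(c | P c) w c <= \sum_(c | Q1 c) w c + \sum_(c | Q2 c) w c.
Proof.
move=> cover; rewrite [X in _ <= X + _]big_mkcond [X in _ <= _ + X]big_mkcond.
rewrite -big_split big_mkcond; apply: leq_sum => c _.
by case: ifP => // /cover; case: (Q1 c); case: (Q2 c) => //= _; apply: leq_addr.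
Qed.

Definition incr n (a b : 'I_n * 'I_n) : bool := (a.1 < b.1) && (a.2 < b.2).
Definition decr n (a b : 'I_n * 'I_n) : bool := (a.1 < b.1) && (b.2 < a.2).

Lemma incr_trans n : transitive (@incr n).
Proof. by move=> b a c /andP[? ?] /andP[? ?]; apply/andP; split; lia. Qed.

Lemma decr_trans n : transitive (@decr n).
Proof. by move=> b a c /andP[? ?] /andP[? ?]; apply/andP; split; lia. Qed.

Section Grid.
Variables (T : finType) (S : {set T}) (row col : T -> nat) (k : nat).
Hypotheses (k_gt0 : 0 < k) (S_gt0 : 0 < #|S|).

Local Notation t := (10 * k ^ 2).

Hypothesis row_sparse : forall i, t * #|[set x in S | row x == i]| <= #|S|.
Hypothesis col_sparse : forall j, t * #|[set x in S | col x == j]| <= #|S|.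

Lemma t_gt0 : 0 < t. Proof. by rewrite muln_gt0 expn_gt0 k_gt0. Qed.

Definition cell (x : T) : 'I_t * 'I_t :=
  (Ordinal (block_index_lt #|S| (prefix_mass S row (row x)) t_gt0),
   Ordinal (block_index_lt #|S| (prefix_mass S col (col x)) t_gt0)).

Definition weight (c : 'I_t * 'I_t) : nat := #|[set x in S | cell x == c]|.

Definition heavy (c : 'I_t * 'I_t) : bool := #|S| <= 2 * t ^ 2 * weight c.

Lemma heavy_weight c : heavy c -> 0 < weight c /\ #|S| <= 200 * k ^ 4 * weight c.
Proof.
rewrite /heavy expnMn -expnM mulnA => heavy_c; split; last by [].
by rewrite lt0n; apply: contraTneq heavy_c => ->; rewrite muln0 -ltnNge.
Qed.

Lemma row_block_mass (b : 'I_t) : t * \sum_(c | c.1 == b) weight c <= 2 * #|S|.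
Proof. by rewrite sum_card_fibres; apply: block_mass. Qed.

Lemma col_block_mass (b : 'I_t) : t * \sum_(c | c.2 == b) weight c <= 2 * #|S|.
Proof. by rewrite sum_card_fibres; apply: block_mass. Qed.

(* Light cells are fewer than t^2, each holding less than |S|/(2 t^2). *)
Lemma light_mass : 2 * \sum_(c | ~~ heavy c) weight c <= #|S|.
Proof.
have : t ^ 2 * (2 * \sum_(c | ~~ heavy c) weight c) <= t ^ 2 * #|S|.
  rewrite mulnA mulnC big_distrl /=.
  apply: leq_trans (_ : \sum_(c | ~~ heavy c) #|S| <= _).
    by apply: leq_sum => c; rewrite /heavy -ltnNge; lia.
  rewrite sum_nat_const leq_mul2r; apply/orP; right.
  by apply: leq_trans (max_card _) _; rewrite card_prod card_ord mulnn.
by rewrite leq_pmul2l // expn_gt0 t_gt0.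
Qed.

Definition heights (c : 'I_t * 'I_t) : 'I_k * 'I_k :=
  (Ordinal (height_lt heavy (@incr t) k_gt0 c),
   Ordinal (height_lt heavy (@decr t) k_gt0 c)).

Section NoLongChain.
Hypothesis no_incr : forall a, ~~ chain_to heavy (@incr t) k.-1 a.
Hypothesis no_decr : forall a, ~~ chain_to heavy (@decr t) k.-1 a.

(* Erdos-Szekeres: two heavy cells with the same heights share a row or
   column block, since otherwise one of the heights would increase. *)
Lemma same_heights_aligned a c : heavy a -> heavy c -> heights a = heights c ->
  (c.1 == a.1) || (c.2 == a.2).
Proof.
move=> Ha Hc [ei ed].
have incr_step := @height_increase _ heavy _ _ k_gt0 (@incr_trans t).
have decr_step := @height_increase _ heavy _ _ k_gt0 (@decr_trans t).
case: (ltngtP c.1 a.1) => h1; last by rewrite (val_inj h1) eqxx.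
1,2: case: (ltngtP c.2 a.2) => h2; last by rewrite (val_inj h2) eqxx orbT.
- by have := incr_step _ _ Hc Ha (introT andP (conj h1 h2)) (no_incr c); lia.
- by have := decr_step _ _ Hc Ha (introT andP (conj h1 h2)) (no_decr c); lia.
- by have := decr_step _ _ Ha Hc (introT andP (conj h1 h2)) (no_decr a); lia.
- by have := incr_step _ _ Ha Hc (introT andP (conj h1 h2)) (no_incr a); lia.
Qed.

(* Each fibre of the heights lies in one row block and one column block. *)
Lemma fibre_mass (u : 'I_k * 'I_k) :
  t * \sum_(c | heavy c && (heights c == u)) weight c <= 4 * #|S|.
Proof.
have [a0 /andP[Ha0 /eqP ha0] | no_a0] := pickP (fun c => heavy c && (heights c == u)).
  have cover : forall c, heavy c && (heights c == u) -> (c.1 == a0.1) || (c.2 == a0.2).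
    by move=> c /andP[Hc /eqP hc]; apply: same_heights_aligned; rewrite ?ha0.
  apply: leq_trans (leq_mul (leqnn t) (sum_le_cover weight cover)) _.
  by rewrite mulnDr -[4]/(2 + 2) mulnDl leq_add ?row_block_mass ?col_block_mass.
by rewrite (eq_bigl _ _ no_a0) big_pred0_eq muln0.
Qed.

Lemma heavy_mass : 10 * \sum_(c | heavy c) weight c <= 4 * #|S|.
Proof.
have : t * \sum_(c | heavy c) weight c <= k ^ 2 * (4 * #|S|).
  rewrite (partition_big heights predT) //= big_distrr /=.
  apply: leq_trans (_ : \sum_(u : 'I_k * 'I_k) 4 * #|S| <= _).
    by apply: leq_sum => u _; apply: fibre_mass.
  by rewrite sum_nat_const card_prod card_ord mulnn.
have k2_gt0 : 0 < k ^ 2 by rewrite expn_gt0 k_gt0.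
move=> le_tH; rewrite -(leq_pmul2l k2_gt0); apply: leq_trans le_tH.
by rewrite mulnCA mulnA.
Qed.
End NoLongChain.

(* Some k heavy cells form an increasing or a decreasing chain: otherwise
   heavy cells carry at most 2|S|/5 and light cells at most |S|/2. *)
Lemma heavy_chain : exists f : 'I_k -> 'I_t * 'I_t,
  (forall i, heavy (f i)) /\
  ((forall i j : 'I_k, i < j -> incr (f i) (f j)) \/
   (forall i j : 'I_k, i < j -> decr (f i) (f j))).
Proof.
pose to_chain (i : 'I_k) : 'I_k.-1.+1 := cast_ord (esym (prednK k_gt0)) i.
have chain_of R a : chain_to heavy R k.-1 a -> exists f : 'I_k -> 'I_t * 'I_t,
    (forall i, heavy (f i)) /\ (forall i j : 'I_k, i < j -> R (f i) (f j)).
  move=> /existsP[f /and3P[/forallP Hf /forallP Rf _]].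
  exists (f \o to_chain); split=> [i | i j lt_ij]; first exact: Hf.
  exact: (implyP (forallP (Rf _) _)).
have [/existsP[a /chain_of[f [Hf Rf]]] | no_incr] :=
  boolP [exists a, chain_to heavy (@incr t) k.-1 a]; first by exists f; split; [|left].
have [/existsP[a /chain_of[f [Hf Rf]]] | no_decr] :=
  boolP [exists a, chain_to heavy (@decr t) k.-1 a]; first by exists f; split; [|right].
exfalso; rewrite !negb_exists in no_incr no_decr.
have := heavy_mass (forallP no_incr) (forallP no_decr); have := light_mass.
have : \sum_c weight c = \sum_(c | heavy c) weight c + \sum_(c | ~~ heavy c) weight c.
  by rewrite (bigID heavy).
have : #|S| = \sum_c weight c.
  by rewrite sum_card_fibres; apply: eq_card => x; rewrite !inE andbT.
lia.
Qed.
End Grid.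

Definition slice (T : Type) (X : seq T) (lo hi : nat) : seq T := take (hi - lo) (drop lo X).

Lemma infix_slice (T : eqType) (X : seq T) lo hi : infix (slice X lo hi) X.
Proof.
rewrite /slice -{2}(cat_take_drop lo X) -{2}(cat_take_drop (hi - lo) (drop lo X)).
exact: infix_infix.
Qed.

Lemma mem_slice (T : eqType) (X : seq T) lo hi x : uniq X ->
  (x \in slice X lo hi) = (x \in X) && (lo <= index x X < hi).
Proof.
move=> uX; have size_slice : size (slice X lo hi) = minn (hi - lo) (size X - lo).
  by rewrite /slice size_take_min size_drop.
apply/idP/idP => [/(nthP x)[j] | /andP[Xx /andP[le_lo lt_hi]]].
  rewrite size_slice => lt_j <-; have lt_jX : lo + j < size X by lia.
  by rewrite /slice nth_take ?nth_drop ?mem_nth ?index_uniq //=; lia.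
have lt_xX : index x X < size X by rewrite index_mem.
apply/(nthP x); exists (index x X - lo); first by rewrite size_slice; lia.
by rewrite /slice nth_take ?nth_drop ?subnKC ?nth_index //; lia.
Qed.

Lemma count_iota_downclosed (Q : pred nat) n i :
  (forall a b, a <= b -> Q b -> Q a) -> i < n -> (i < count Q (iota 0 n)) = Q i.
Proof.
move=> down lt_in; have [Qi | nQi] := boolP (Q i).
  rewrite -(subnKC lt_in) iotaD count_cat; apply: leq_trans (leq_addr _ _).
  rewrite -[X in X <= _](size_iota 0 i.+1) -count_predT.
  apply/eq_leq/eq_in_count => j; rewrite mem_iota add0n => /andP[_ lt_j].
  by rewrite /= (down j i _ Qi) // -ltnS.
rewrite -(subnKC (ltnW lt_in)) iotaD count_cat add0n.
have -> : count Q (iota i (n - i)) = 0.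
  apply/eqP; rewrite -leqn0 leqNgt -has_count; apply/hasPn => j.
  by rewrite mem_iota => /andP[le_ij _]; apply: contra nQi; apply: down.
by apply/negbTE; rewrite addn0 -leqNgt (leq_trans (count_size _ _)) // size_iota.
Qed.

Section SeqBlocks.
Variables (T : finType) (Z : seq T) (bm : nat -> nat).
Hypotheses (uZ : uniq Z) (bm_mono : {homo bm : a b / a <= b}).

Definition block_start (b : nat) : nat := count (fun j => bm j < b) (iota 0 (size Z)).

Definition seq_block (b : nat) : seq T := slice Z (block_start b) (block_start b.+1).

Lemma mem_seq_block b u : (u \in seq_block b) = (u \in Z) && (bm (index u Z) == b).
Proof.
rewrite mem_slice //; case Zu: (u \in Z) => //=; rewrite -index_mem in Zu.
have down b' : forall a c, a <= c -> bm c < b' -> bm a < b'.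
  by move=> a c /bm_mono; apply: leq_ltn_trans.
rewrite /block_start leqNgt !count_iota_downclosed //; try exact: down.
by rewrite ltnS; case: ltngtP.
Qed.

Lemma seq_block_below b1 b2 : b2 < b1 -> below_in Z (seq_block b1) (seq_block b2).
Proof.
move=> lt_b; apply/allP => u; rewrite mem_seq_block => /andP[_ /eqP bu].
apply/allP => v; rewrite mem_seq_block => /andP[_ /eqP bv].
by rewrite ltnNge; apply/negP => /bm_mono; lia.
Qed.

Lemma seq_block_disjoint b1 b2 : b1 != b2 -> [disjoint seq_block b1 & seq_block b2].
Proof.
move=> ne_b; rewrite disjoint_has; apply/hasPn => u; rewrite /= !mem_seq_block.
move=> /andP[_ /eqP ub1]; apply: contra ne_b => /andP[_ /eqP ub2].
by rewrite -ub1 -ub2.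
Qed.

Lemma seq_block_subpath b u : u \in seq_block b -> subpath_of (seq_block b) Z.
Proof. by move=> bu; rewrite /subpath_of infix_slice andbT; apply: contraTneq bu => ->. Qed.
End SeqBlocks.

Section ChordGrid.
Variables (V : finType) (e : rel V) (X Y : seq V) (x0 : V).
Hypotheses (uX : uniq X) (uY : uniq Y).

Local Notation point := ('I_(size X) * 'I_(size Y))%type.

Definition chord_points : {set point} := [set x : point | e (nth x0 X x.1) (nth x0 Y x.2)].

Definition endpoints (x : point) : V * V := (nth x0 X x.1, nth x0 Y x.2).

Definition row_pos (x : point) : nat := x.1.
Definition col_pos (x : point) : nat := x.2.

Lemma endpoints_inj : injective endpoints.
Proof.
move=> [a b] [c d] [/eqP Eac /eqP Ebd].
by rewrite (nth_uniq x0 (ltn_ord a) (ltn_ord c) uX) in Eac;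
   rewrite (nth_uniq x0 (ltn_ord b) (ltn_ord d) uY) in Ebd;
   rewrite (val_inj (eqP Eac)) (val_inj (eqP Ebd)).
Qed.

Lemma card_chord_points : #|chord_points| = nchords e X Y.
Proof.
rewrite /nchords -(card_in_imset (in2W endpoints_inj)).
suff -> : chords e X Y = endpoints @: chord_points by [].
apply/setP => -[u v]; rewrite /chords !inE /=; apply/idP/imsetP => [/and3P[Xu Yv Euv] | ].
  have iu : index u X < size X by rewrite index_mem.
  have iv : index v Y < size Y by rewrite index_mem.
  by exists (Ordinal iu, Ordinal iv); rewrite ?inE /endpoints /= !nth_index.
by move=> [[a b]]; rewrite inE /= => Eab [-> ->]; rewrite !mem_nth.
Qed.

(* A row of chord points is the set of chords at one vertex of X. *)
Lemma row_sparse t :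
  (forall v, v \in X ++ Y -> t * chord_deg e X Y v <= nchords e X Y) ->
  forall i, t * #|[set x in chord_points | row_pos x == i]| <= #|chord_points|.
Proof.
move=> deg_small i; rewrite card_chord_points.
have [lt_iX | le_Xi] := ltnP i (size X); last first.
  rewrite (_ : [set x in _ | _] = set0) ?cards0 ?muln0 //; apply/setP => x.
  rewrite !inE /row_pos; apply/negbTE/nandP; right; apply/eqP => x_i.
  by move: (ltn_ord x.1); rewrite x_i ltnNge le_Xi.
apply: leq_trans (deg_small (nth x0 X i) _); last by rewrite mem_cat mem_nth.
rewrite leq_mul2l /chord_deg; apply/orP; right; apply: leq_trans (leq_addr _ _).
have inj_col : {in [set x in chord_points | row_pos x == i] &,
                 injective (fun x : point => nth x0 Y x.2)}.
  move=> a b; rewrite !inE /row_pos => /andP[_ /eqP ai] /andP[_ /eqP bi] Eab.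
  by apply: endpoints_inj; rewrite /endpoints Eab (val_inj (etrans ai (esym bi))).
rewrite -(card_in_imset inj_col); apply/subset_leq_card/subsetP => y /imsetP[x].
by rewrite !inE /row_pos => /andP[Ex /eqP xi] ->; rewrite mem_nth //= -xi mem_nth.
Qed.

(* A column of chord points is the set of chords at one vertex of Y. *)
Lemma col_sparse t :
  (forall v, v \in X ++ Y -> t * chord_deg e X Y v <= nchords e X Y) ->
  forall j, t * #|[set x in chord_points | col_pos x == j]| <= #|chord_points|.
Proof.
move=> deg_small j; rewrite card_chord_points.
have [lt_jY | le_Yj] := ltnP j (size Y); last first.
  rewrite (_ : [set x in _ | _] = set0) ?cards0 ?muln0 //; apply/setP => x.
  rewrite !inE /col_pos; apply/negbTE/nandP; right; apply/eqP => x_j.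
  by move: (ltn_ord x.2); rewrite x_j ltnNge le_Yj.
apply: leq_trans (deg_small (nth x0 Y j) _); last by rewrite mem_cat mem_nth ?orbT.
rewrite leq_mul2l /chord_deg; apply/orP; right; apply: leq_trans (leq_addl _ _).
have inj_row : {in [set x in chord_points | col_pos x == j] &,
                 injective (fun x : point => nth x0 X x.1)}.
  move=> a b; rewrite !inE /col_pos => /andP[_ /eqP aj] /andP[_ /eqP bj] Eab.
  by apply: endpoints_inj; rewrite /endpoints Eab (val_inj (etrans aj (esym bj))).
rewrite -(card_in_imset inj_row); apply/subset_leq_card/subsetP => y /imsetP[x].
by rewrite !inE /col_pos => /andP[Ex /eqP xj] ->; rewrite mem_nth //= -xj mem_nth.
Qed.
End ChordGrid.

Section Assembly.
Variables (V : finType) (e : rel V) (X Y : seq V) (x0 : V) (k : nat).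
Hypotheses (uX : uniq X) (uY : uniq Y) (k_gt0 : 0 < k).

Local Notation S := (chord_points e X Y x0).
Local Notation t := (10 * k ^ 2).
Local Notation cell := (cell S (@row_pos V X Y) (@col_pos V X Y) k_gt0).
Local Notation weight := (weight S (@row_pos V X Y) (@col_pos V X Y) k_gt0).

Definition Xblock (b : nat) : seq V := seq_block X (block_of S (@row_pos V X Y) t) b.
Definition Yblock (b : nat) : seq V := seq_block Y (block_of S (@col_pos V X Y) t) b.

Lemma endpoints_in_blocks (x : 'I_(size X) * 'I_(size Y)) :
  (nth x0 X x.1 \in Xblock (cell x).1) && (nth x0 Y x.2 \in Yblock (cell x).2).
Proof.
rewrite !mem_seq_block ?mem_nth ?index_uniq //=; try exact: block_of_mono.
by rewrite /block_of !eqxx.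
Qed.

Lemma weight_le_nchords c : weight c <= nchords e (Xblock c.1) (Yblock c.2).
Proof.
change (#|[set x in S | cell x == c]| <= #|chords e (Xblock c.1) (Yblock c.2)|).
rewrite -(card_in_imset (in2W (@endpoints_inj _ _ _ x0 uX uY))).
apply/subset_leq_card/subsetP => y /imsetP[x]; rewrite !inE => /andP[Ex /eqP <-] ->.
by case/andP: (endpoints_in_blocks x) => /= -> ->.
Qed.

Lemma block_subpaths c : 0 < weight c ->
  subpath_of (Xblock c.1) X /\ subpath_of (Yblock c.2) Y.
Proof.
move=> /card_gt0P[x]; rewrite inE => /andP[_ /eqP <-].
have /andP[Xx Yx] := endpoints_in_blocks x.
by split; [apply: seq_block_subpath Xx | apply: seq_block_subpath Yx].
Qed.

(* A chain of occupied cells, read in reverse so that the X-blocks go down. *)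
Definition chain_Xs (f : 'I_k -> 'I_t * 'I_t) (i : 'I_k) : seq V := Xblock (f (rev_ord i)).1.
Definition chain_Ys (f : 'I_k -> 'I_t * 'I_t) (i : 'I_k) : seq V := Yblock (f (rev_ord i)).2.

Lemma chain_collection (f : 'I_k -> 'I_t * 'I_t) :
  (forall i, 0 < weight (f i)) ->
  (forall i j : 'I_k, i < j -> incr (f i) (f j)) \/
  (forall i j : 'I_k, i < j -> decr (f i) (f j)) ->
  collection X Y (chain_Xs f) (chain_Ys f) /\
  (parallel Y (chain_Ys f) \/ interlacing Y (chain_Ys f)).
Proof.
move=> occupied chain; pose g i := f (rev_ord i).
have rev_lt (i j : 'I_k) : i < j -> rev_ord j < rev_ord i by rewrite /=; have := ltn_ord j; lia.
have lt1 (i j : 'I_k) : i < j -> (g j).1 < (g i).1.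
  by move/rev_lt => lt_ij; case: chain => /(_ _ _ lt_ij) /andP[].
have ne2 (i j : 'I_k) : i < j -> val (g j).2 != (g i).2.
  move/rev_lt => lt_ij; rewrite neq_ltn.
  by case: chain => /(_ _ _ lt_ij) /andP[_ ->]; rewrite ?orbT.
have neq_cases (i j : 'I_k) : i != j -> (i < j) || (j < i) by rewrite -val_eqE neq_ltn.
have mono_X : {homo block_of S (@row_pos V X Y) t : a b / a <= b} := @block_of_mono _ _ _ t.
have mono_Y : {homo block_of S (@col_pos V X Y) t : a b / a <= b} := @block_of_mono _ _ _ t.
split; first split.
- by move=> i; case: (block_subpaths (occupied (rev_ord i))).
- by move=> i; case: (block_subpaths (occupied (rev_ord i))).
- move=> i j /neq_cases ij; apply: seq_block_disjoint => //.
  by case/orP: ij => /lt1; rewrite neq_ltn => ->; rewrite ?orbT.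
- move=> i j /neq_cases ij; apply: seq_block_disjoint => //.
  by case/orP: ij => /ne2; rewrite // eq_sym.
- by move=> i j /lt1; apply: seq_block_below.
case: chain => R; [left | right] => i j /rev_lt /R /andP[_ lt2];
  exact: seq_block_below.
Qed.
End Assembly.

Lemma is_path_spec (V : finType) (e : rel V) (P : seq V) :
  is_path e P -> uniq P /\ exists x, x \in P.
Proof. by case: P => // x P /andP[_ uP]; split => //; exists x; rewrite inE eqxx. Qed.

Import GRing.Theory Num.Theory.

Lemma scaled_ratio_le (m K N : nat) : 0 < K -> m <= 200 * K * N ->
  ((200%:R)^-1 * (m%:R / K%:R) <= N%:R :> rat)%R.
Proof.
move=> K_gt0 le_m.
have pos200 : (0 < 200%:R :> rat)%R by rewrite ltr0n.
have posK : (0 < K%:R :> rat)%R by rewrite ltr0n.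
rewrite (ler_pdivrMl _ _ pos200) (ler_pdivrMr _ _ posK).
have -> : (200%:R * N%:R * K%:R = (200 * N * K)%:R :> rat)%R by rewrite !natrM.
by rewrite ler_nat mulnAC.
Qed.

Theorem lemma4p1 :
  exists c : rat, (0 < c)%R /\
  forall (V : finType) (e : rel V), symmetric e -> irreflexive e ->
  forall (X Y : seq V) (k : nat),
    section_pair e X Y -> (1 <= k)%N ->
    let m := nchords e X Y in
    (0 < m)%N ->
    (forall v, v \in X ++ Y -> (10 * k ^ 2 * chord_deg e X Y v <= m)%N) ->
    exists Xs Ys : 'I_k -> seq V,
      [/\ collection X Y Xs Ys,
          parallel Y Ys \/ interlacing Y Ys &
          forall i : 'I_k,
            (c * (m%:R / (k ^ 4)%:R) <= (nchords e (Xs i) (Ys i))%:R)%R].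
Proof.
exists (200%:R)^-1%R; split; first by rewrite invr_gt0 ltr0n.
move=> V e _ _ X Y k /and3P[/is_path_spec[uX [x0 _]] /is_path_spec[uY _] _] k_gt0 m.
move=> m_gt0 deg_small.
have S_gt0 : 0 < #|chord_points e X Y x0| by rewrite card_chord_points.
have [f [heavy_f chain_f]] := heavy_chain k_gt0 S_gt0
  (row_sparse x0 uX uY deg_small) (col_sparse x0 uX uY deg_small).
have occupied i := (heavy_weight S_gt0 (heavy_f i)).1.
have [collection_f shape_f] := chain_collection uX uY occupied chain_f.
exists (chain_Xs e X Y x0 f), (chain_Ys e X Y x0 f).
split=> [// | // | i].
apply: scaled_ratio_le; first by rewrite expn_gt0 k_gt0.
have [_ le_m] := heavy_weight S_gt0 (heavy_f (rev_ord i)).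
rewrite /m -(@card_chord_points _ e X Y x0 uX uY); apply: leq_trans le_m _.
by rewrite leq_mul2l; apply/orP; right; apply: weight_le_nchords.
Qed.
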